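(* Let $x \in \mathcal{X}_f$ be arbitrary and $\mathcal{A}(x)$ the corresponding active set. Assume the matrix $G^{\mathcal{A}}$ has full row rank and let $(G^{\mathcal{A}})^{\prime}=\begin{bmatrix} E & J \end{bmatrix} \begin{bmatrix} F \\ 0\end{bmatrix}$ be a QR factorization of $(G^{\mathcal{A}})^{\prime}$. Let $K_{\epsilon}=E \Theta S^{\mathcal{A}}- J \Psi J^{\prime} \hat{H} E \Theta S^{\mathcal{A}}$, $b_{\epsilon}=(E-J \Psi J^{\prime} \hat{H} E) \Theta W^{\mathcal{A}} - J \Psi J^{\prime} c$, $K_{\lambda}=-\Theta^{\prime} E^{\prime} (\hat{H} K_{\epsilon})$, $b_{\lambda}=-\Theta^{\prime} E^{\prime} (\hat{H} b_{\epsilon}+c)$, where $\Psi=(J^{\prime}\hat{H}J)^{-1}$ and $\Theta=(G^{\mathcal{A}}E)^{-1}$ exist by construction. Then $\epsilon^\star(x)=K_{\epsilon}x+b_{\epsilon}$ is the affine optimizer and $\lambda^{\star \mathcal{A}}(x)=K_{\lambda}x+b_{\lambda}$ are the corresponding affine active Lagrange multipliers on the polytope $\mathcal{P}=\{x \in \mathbb{R}^n \mid Tx \leq d\}$ with $T=\begin{pmatrix} G^{\mathcal{I}} K_\epsilon-S^{\mathcal{I}} \\ -K_{\lambda}\end{pmatrix}$ and $d=\begin{pmatrix} W^{\mathcal{I}} -G^{\mathcal{I}} b_{\epsilon} \\ b_{\lambda}\end{pmatrix}$.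
   Context: Consider the linear system $x(k+1)=Ax(k)+Bu(k)+Dw(k)$ with $x\in\mathbb{R}^n$, $u\in\mathbb{R}^m$, $w\in\mathbb{R}^s$, compact polyhedral constraints $x\in\mathcal{X}$, $u\in\mathcal{U}$, $w\in\mathcal{D}$ containing the origin in their interior, and input $u(k)=-K_\infty x(k)+v(k)$ with LQR gain $K_\infty$ and correction input $v$. A min-max MPC problem over horizon $N$ (worst case over disturbance sequences) is reformulated as the QP $\min_{Z,\gamma} \frac12 Z'HZ+\gamma$ s.t. $G_{\mathrm m}Z+g_{\mathrm m}\gamma\le W_{\mathrm m}+S_{\mathrm m}x$, $G_{\mathrm c}Z\le W_{\mathrm c}+S_{\mathrm c}x$, with $H\succ 0$, $Z\in\mathbb{R}^{mN}$, $\gamma\in\mathbb{R}$, $Z=V+H^{-1}L'x$ where $V$ is the correction input sequence; this QP has a unique optimizer. With $\epsilon=[Z',\gamma]'$ it is written as $\min_\epsilon \frac12\epsilon'\hat H\epsilon+c'\epsilon$ s.t. $G\epsilon\le W+Sx$, where $\hat H=\begin{pmatrix}H&0\\0&0\end{pmatrix}$ (singular), $c'=(0,\dots,0,1)$, $G\in\mathbb{R}^{(l+r)\times(mN+1)}$, $W\in\mathbb{R}^{l+r}$, $S\in\mathbb{R}^{(l+r)\times n}$. $\mathcal{X}_f$ is the set of states for which the problem is feasible; $\epsilon^\star(x)$, $\lambda^\star(x)$ are the optimizer and Lagrange multipliers. Active set $\mathcal{A}(x)=\{i \mid G^i\epsilon^\star(x)-W^i-S^ix=0\}$, inactive set $\mathcal{I}(x)=\{i\mid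 G^i\epsilon^\star(x)-W^i-S^ix<0\}$. For a matrix $M$, $M^{\mathcal{L}}$ denotes the submatrix of rows indexed by $\mathcal{L}$. *)

From HB Require Import structures.
From mathcomp Require Import all_boot all_order all_algebra.
Set Implicit Arguments. Unset Strict Implicit. Unset Printing Implicit Defensive.
Import Order.TTheory GRing.Theory Num.Theory.
Local Open Scope ring_scope.

Section GenericQP.
Variable R : realFieldType.

Definition qp_cost (q : nat) (Hh : 'M[R]_q) (c e : 'cV[R]_q) : R :=
  2^-1 * (e^T *m Hh *m e) 0 0 + (c^T *m e) 0 0.

Definition qp_feasible (q k n : nat) (G : 'M[R]_(k, q)) (W : 'cV[R]_k)
  (S : 'M[R]_(k, n)) (x : 'cV[R]_n) (e : 'cV[R]_q) : Prop :=
  forall i, (G *m e) i 0 <= (W + S *m x) i 0.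

Definition qp_optimizer (q k n : nat) (Hh : 'M[R]_q) (c : 'cV[R]_q)
  (G : 'M[R]_(k, q)) (W : 'cV[R]_k) (S : 'M[R]_(k, n)) (x : 'cV[R]_n)
  (e : 'cV[R]_q) : Prop :=
  qp_feasible G W S x e /\
  forall e', qp_feasible G W S x e' -> qp_cost Hh c e <= qp_cost Hh c e'.

Definition qp_multiplier (q k n : nat) (Hh : 'M[R]_q) (c : 'cV[R]_q)
  (G : 'M[R]_(k, q)) (W : 'cV[R]_k) (S : 'M[R]_(k, n)) (x : 'cV[R]_n)
  (e : 'cV[R]_q) (lam : 'cV[R]_k) : Prop :=
  (forall i, 0 <= lam i 0) /\
  Hh *m e + c + G^T *m lam = 0 /\
  (forall i, lam i 0 * (G *m e - W - S *m x) i 0 = 0).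

Definition active_set (q k n : nat) (G : 'M[R]_(k, q)) (W : 'cV[R]_k)
  (S : 'M[R]_(k, n)) (x : 'cV[R]_n) (e : 'cV[R]_q) : {set 'I_k} :=
  [set i | (G *m e - W - S *m x) i 0 == 0].

Definition inactive_set (q k n : nat) (G : 'M[R]_(k, q)) (W : 'cV[R]_k)
  (S : 'M[R]_(k, n)) (x : 'cV[R]_n) (e : 'cV[R]_q) : {set 'I_k} :=
  [set i | (G *m e - W - S *m x) i 0 < 0].

(* M^L : submatrix of the rows of M indexed by L (in increasing order) *)
Definition rows_of (k p : nat) (L : {set 'I_k}) (M : 'M[R]_(k, p))
  : 'M[R]_(#|L|, p) := rowsub (fun i : 'I_#|L| => enum_val i) M.

Definition posdef (p : nat) (M : 'M[R]_p) : Prop :=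
  M^T = M /\ forall v : 'cV[R]_p, v != 0 -> 0 < (v^T *m M *m v) 0 0.

End GenericQP.

Section MinMaxQP.
Variable R : realFieldType.
Variables (nz l r n : nat).

(* Hhat = diag(H, 0) for epsilon = [Z; gamma] *)
Definition Hhat (H : 'M[R]_nz) : 'M[R]_(nz + 1) := block_mx H 0 0 0.
Definition cvec : 'cV[R]_(nz + 1) := col_mx 0 (const_mx 1).
Definition Gmat (Gm : 'M[R]_(l, nz)) (gm : 'cV[R]_l) (Gc : 'M[R]_(r, nz))
  : 'M[R]_(l + r, nz + 1) := col_mx (row_mx Gm gm) (row_mx Gc 0).
Definition Wvec (Wm : 'cV[R]_l) (Wc : 'cV[R]_r) : 'cV[R]_(l + r) := col_mx Wm Wc.
Definition Smat (Sm : 'M[R]_(l, n)) (Sc : 'M[R]_(r, n)) : 'M[R]_(l + r, n) :=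
  col_mx Sm Sc.
End MinMaxQP.

Section AffineLaw.
Variable R : realFieldType.
Variables (q a b n : nat).
(* q = number of decision variables, a = #active, b = #(complement basis) *)
Variables (Hh : 'M[R]_q) (c : 'cV[R]_q) (GA : 'M[R]_(a, q))
  (SA : 'M[R]_(a, n)) (WA : 'cV[R]_a) (E : 'M[R]_(q, a)) (J : 'M[R]_(q, b)).

Definition Psi_mx : 'M[R]_b := invmx (J^T *m Hh *m J).
Definition Theta_mx : 'M[R]_a := invmx (GA *m E).

Definition K_eps : 'M[R]_(q, n) :=
  E *m Theta_mx *m SA - J *m Psi_mx *m J^T *m Hh *m E *m Theta_mx *m SA.
Definition b_eps : 'cV[R]_q :=
  (E - J *m Psi_mx *m J^T *m Hh *m E) *m Theta_mx *m WA
  - J *m Psi_mx *m J^T *m c.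
Definition K_lam : 'M[R]_(a, n) :=
  - (Theta_mx^T *m E^T *m (Hh *m K_eps)).
Definition b_lam : 'cV[R]_a :=
  - (Theta_mx^T *m E^T *m (Hh *m b_eps + c)).
End AffineLaw.

(* On the polytope the active set stays active and the inactive constraints stay
   slack, so the optimizer solves the equality-constrained QP with constraint
   G^A e = W^A + S^A x.  Writing e = E u + J z with [E J] orthonormal and
   G^A J = 0, the constraint fixes u through Theta and stationarity along the
   null space J fixes z through Psi; the multipliers are the E-component of
   -(Hhat e + c).  The rows of T x <= d say exactly that the inactive constraints
   hold and that these multipliers are nonnegative, and the KKT conditions
   suffice because Hhat is positive semidefinite.  Psi exists because Hhat is
   definite except along c, while G^A c <> 0: otherwise gamma could be lowered
   at the optimizer eps*(x) without leaving the feasible set. *)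

From HB Require Import structures.
From mathcomp Require Import all_boot all_order all_algebra.
From mathcomp Require Import ring lra.
Import Order.TTheory GRing.Theory Num.Theory.
Set Implicit Arguments. Unset Strict Implicit.
Local Open Scope ring_scope.

Section EntryArithmetic.
Variables (R : realFieldType) (p k : nat).

Lemma addmxE (M M' : 'M[R]_(p, k)) i j : (M + M') i j = M i j + M' i j.
Proof. by rewrite mxE. Qed.

Lemma oppmxE (M : 'M[R]_(p, k)) i j : (- M) i j = - M i j.
Proof. by rewrite mxE. Qed.

Lemma scalemxE a (M : 'M[R]_(p, k)) i j : (a *: M) i j = a * M i j.
Proof. by rewrite mxE. Qed.

End EntryArithmetic.

Section RowsOf.
Variables (R : realFieldType) (k : nat) (L : {set 'I_k}).

Lemma rows_ofE p (M : 'M[R]_(k, p)) j t : rows_of L M j t = M (enum_val j) t.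
Proof. by rewrite mxE. Qed.

Lemma rows_of_in p (M : 'M[R]_(k, p)) i t (iL : i \in L) :
  rows_of L M (enum_rank_in iL i) t = M i t.
Proof. by rewrite rows_ofE enum_rankK_in. Qed.

Lemma rows_of_mul p s (M : 'M[R]_(k, p)) (B : 'M[R]_(p, s)) :
  rows_of L M *m B = rows_of L (M *m B).
Proof. exact: mul_rowsub_mx. Qed.

Lemma rows_of_mul1 p (M : 'M[R]_(k, p)) : rows_of L 1%:M *m M = rows_of L M.
Proof. by rewrite rows_of_mul mul1mx. Qed.

Definition zero_extend (v : 'cV[R]_#|L|) : 'cV[R]_k := (rows_of L 1%:M)^T *m v.

Lemma rows_of_zero_extend v : rows_of L (zero_extend v) = v.
Proof.
have PPt : rows_of L 1%:M *m (rows_of L 1%:M)^T = 1%:M :> 'M[R]_#|L|.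
  by apply/matrixP => j j'; rewrite rows_of_mul1 !mxE (inj_eq enum_val_inj) eq_sym.
by rewrite -rows_of_mul1 mulmxA PPt mul1mx.
Qed.

Lemma zero_extend_enum_val v j : zero_extend v (enum_val j) 0 = v j 0.
Proof. by rewrite -rows_ofE rows_of_zero_extend. Qed.

Lemma zero_extend_notin v i : i \notin L -> zero_extend v i 0 = 0.
Proof.
move=> iL; rewrite mxE big1 // => j _; rewrite !mxE.
by have [ji|] := eqVneq (enum_val j) i; [move: iL; rewrite -ji enum_valP | rewrite mul0r].
Qed.

Lemma trmx_mul_zero_extend p (M : 'M[R]_(k, p)) v :
  M^T *m zero_extend v = (rows_of L M)^T *m v.
Proof. by rewrite mulmxA -trmx_mul rows_of_mul1. Qed.

End RowsOf.
Arguments zero_extend {R k} L v.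

Section ParametricQP.
Variables (R : realFieldType) (q k n : nat) (Hh : 'M[R]_q) (c : 'cV[R]_q).
Variables (G : 'M[R]_(k, q)) (W : 'cV[R]_k) (S : 'M[R]_(k, n)) (x : 'cV[R]_n).

Local Notation slack e := (G *m e - W - S *m x).

Lemma qp_feasible_slack e i : qp_feasible G W S x e -> (slack e) i 0 <= 0.
Proof. by move/(_ i); rewrite !addmxE !oppmxE; lra. Qed.

Lemma notin_active_set e i : qp_feasible G W S x e ->
  i \notin active_set G W S x e -> i \in inactive_set G W S x e.
Proof.
by move=> /(qp_feasible_slack i) sl; rewrite !inE lt_neqAle sl andbT.
Qed.

Lemma qp_feasible_dir e d : qp_feasible G W S x e ->
  (forall i, i \in active_set G W S x e -> (G *m d) i 0 <= 0) ->
  exists2 t, 0 < t & qp_feasible G W S x (e + t *: d).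
Proof.
move=> fe dA; pose P i := 0 < (G *m d) i 0.
have ratio_gt0 i : P i -> 0 < - (slack e) i 0 / (G *m d) i 0.
  move=> Pi; rewrite divr_gt0 // oppr_gt0 lt_neqAle qp_feasible_slack // andbT.
  by apply: contraTN Pi => sl0; rewrite /P -leNgt dA // inE.
pose t := \big[Order.min/1]_(i | P i) (- (slack e) i 0 / (G *m d) i 0).
have t_gt0 : 0 < t by exact: lt_bigmin.
exists t => // i; rewrite mulmxDr -scalemxAr !addmxE scalemxE.
have := qp_feasible_slack i fe; rewrite !addmxE !oppmxE => sl.
have [Pi|] := boolP (P i).
  have : t <= - (slack e) i 0 / (G *m d) i 0 by exact: bigmin_le_cond.
  rewrite ler_pdivlMr // !addmxE !oppmxE; lra.
rewrite /P -leNgt => Gd_le0.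
have := mulr_ge0_le0 (ltW t_gt0) Gd_le0; lra.
Qed.

Hypothesis HhT : Hh^T = Hh.

Lemma qp_costD e d : qp_cost Hh c (e + d) =
  qp_cost Hh c e + 2^-1 * (d^T *m Hh *m d) 0 0 + ((Hh *m e + c)^T *m d) 0 0.
Proof.
have sym : (d^T *m Hh *m e) 0 0 = (e^T *m Hh *m d) 0 0.
  by rewrite -[d^T *m Hh *m e]trmxK mxE !trmx_mul trmxK HhT mulmxA.
by rewrite /qp_cost !linearD /= !mulmxDl trmx_mul HhT !addmxE sym; lra.
Qed.

Hypothesis Hh_psd : forall y : 'cV[R]_q, 0 <= (y^T *m Hh *m y) 0 0.

Lemma qp_multiplier_optimizer e lam : qp_feasible G W S x e ->
  qp_multiplier Hh c G W S x e lam -> qp_optimizer Hh c G W S x e.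
Proof.
move=> fe [lam_ge0 [stat compl]]; split=> // e' fe'.
rewrite -(subrKC e e') qp_costD.
have grad_eq : Hh *m e + c = - (G^T *m lam) by apply/eqP; rewrite -addr_eq0 stat.
have lin : 0 <= ((Hh *m e + c)^T *m (e' - e)) 0 0.
  rewrite grad_eq linearN /= trmx_mul trmxK mulNmx -mulmxA oppmxE oppr_ge0 mxE.
  apply: sumr_le0 => j _; rewrite mxE.
  have -> : (G *m (e' - e)) j 0 = (slack e') j 0 - (slack e) j 0.
    by rewrite mulmxBr !addmxE !oppmxE; ring.
  rewrite mulrBr compl subr0; apply: mulr_ge0_le0 => //.
  exact: qp_feasible_slack.
have := Hh_psd (e' - e); have : (0 : R) <= 2^-1 by rewrite invr_ge0 ler0n.
nra.
Qed.

End ParametricQP.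

Section OrthonormalBasis.
Variables (R : realFieldType) (q a b : nat) (E : 'M[R]_(q, a)) (J : 'M[R]_(q, b)).
Hypothesis EJ_orth : (row_mx E J)^T *m row_mx E J = 1%:M.

Lemma row_mx_orthonormal : E^T *m J = 0 /\ J^T *m J = 1%:M.
Proof.
move: EJ_orth; rewrite tr_row_mx mul_col_row scalar_mx_block.
by case/eq_block_mx.
Qed.

Lemma row_mx_orthonormalC : (a + b = q)%N -> E *m E^T + J *m J^T = 1%:M.
Proof.
have orthC k (U : 'M[R]_(q, k)) : k = q -> U^T *m U = 1%:M -> U *m U^T = 1%:M.
  by move=> kq; subst k; apply: mulmx1C.
by move=> abq; rewrite -mul_row_col -tr_row_mx orthC.
Qed.

End OrthonormalBasis.

Lemma mulmx_EEt (R : realFieldType) (q a b : nat) (GA : 'M[R]_(a, q))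
    (E : 'M[R]_(q, a)) (J : 'M[R]_(q, b)) :
  GA *m J = 0 -> E *m E^T + J *m J^T = 1%:M -> GA *m E *m E^T = GA.
Proof.
by move=> GAJ EEJJ; rewrite -[RHS]mulmx1 -EEJJ mulmxDr !mulmxA GAJ mul0mx addr0.
Qed.

Lemma unitmx_full_rank_mul (R : realFieldType) (q a : nat) (M : 'M[R]_(a, q))
    (E : 'M[R]_(q, a)) (E' : 'M[R]_(a, q)) :
  \rank M = a -> M *m E *m E' = M -> M *m E \in unitmx.
Proof.
move=> rkM ME; rewrite -row_free_unit /row_free eqn_leq rank_leq_row /=.
by rewrite -{1}rkM -{1}ME mxrankM_maxl.
Qed.

Section AffineLawAlgebra.
Variables (R : realFieldType) (q a b n : nat) (Hh : 'M[R]_q) (c : 'cV[R]_q).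
Variables (GA : 'M[R]_(a, q)) (SA : 'M[R]_(a, n)) (WA : 'cV[R]_a).
Variables (E : 'M[R]_(q, a)) (J : 'M[R]_(q, b)).
Hypotheses (GAE_unit : GA *m E \in unitmx) (JHJ_unit : J^T *m Hh *m J \in unitmx).
Hypotheses (GAJ : GA *m J = 0) (EEJJ : E *m E^T + J *m J^T = 1%:M).
Variable x : 'cV[R]_n.

Local Notation Theta := (Theta_mx GA E).
Local Notation Psi := (Psi_mx Hh J).
Local Notation eps := (K_eps Hh GA SA E J *m x + b_eps Hh c GA WA E J).
Local Notation lam := (K_lam Hh GA SA E J *m x + b_lam Hh c GA WA E J).
Local Notation u := (E *m Theta *m (SA *m x + WA)).

Lemma affine_optimizerE : eps = u - J *m Psi *m J^T *m (Hh *m u + c).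
Proof.
rewrite /K_eps /b_eps !(mulmxDr, mulmxBl, mulmxBr, mulmxDl, mulNmx, mulmxA).
by rewrite !opprD !addrA (addrAC (E *m _ *m _ *m x)).
Qed.

Lemma affine_optimizer_active : GA *m eps = SA *m x + WA.
Proof.
by rewrite affine_optimizerE mulmxBr !mulmxA GAJ !mul0mx subr0 /Theta_mx mulmxV ?mul1mx.
Qed.

Lemma affine_optimizer_stationary : J^T *m (Hh *m eps + c) = 0.
Proof.
rewrite affine_optimizerE mulmxBr addrAC mulmxBr !mulmxA /Psi_mx mulmxV //.
by rewrite mul1mx subrr.
Qed.

Lemma affine_multiplier_stationary : GA^T *m lam = - (Hh *m eps + c).
Proof.
have ThGA : Theta *m GA = E^T.
  by rewrite -{2}(mulmx_EEt GAJ EEJJ) mulmxA mulVmx ?mul1mx.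
have EEt_v : E *m E^T *m (Hh *m eps + c) = Hh *m eps + c.
  rewrite -[RHS]mul1mx -EEJJ mulmxDl -(mulmxA J) affine_optimizer_stationary.
  by rewrite mulmx0 addr0.
rewrite /K_lam /b_lam mulNmx -opprD mulmxN -!mulmxA -!mulmxDr addrA -mulmxDr.
by rewrite !mulmxA -trmx_mul ThGA trmxK EEt_v.
Qed.

End AffineLawAlgebra.

Lemma col_mx_mul_le (R : realFieldType) (k1 k2 n : nat) (T1 : 'M[R]_(k1, n))
    (T2 : 'M[R]_(k2, n)) (d1 : 'cV[R]_k1) (d2 : 'cV[R]_k2) (x : 'cV[R]_n) :
  (forall i, (col_mx T1 T2 *m x) i 0 <= col_mx d1 d2 i 0) ->
  (forall i, (T1 *m x) i 0 <= d1 i 0) /\ (forall j, (T2 *m x) j 0 <= d2 j 0).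
Proof.
move=> le_col; split=> i; [move: (le_col (lshift k2 i)) | move: (le_col (rshift k1 i))].
  by rewrite mul_col_mx !col_mxEu.
by rewrite mul_col_mx !col_mxEd.
Qed.

Section ActiveSetAffineLaw.
Variables (R : realFieldType) (q k n b : nat) (Hh : 'M[R]_q) (c : 'cV[R]_q).
Variables (G : 'M[R]_(k, q)) (W : 'cV[R]_k) (S : 'M[R]_(k, n)).
Variables (x0 : 'cV[R]_n) (e0 : 'cV[R]_q).

Local Notation A := (active_set G W S x0 e0).
Local Notation I := (inactive_set G W S x0 e0).
Local Notation GA := (rows_of A G).

Variables (E : 'M[R]_(q, #|A|)) (J : 'M[R]_(q, b)).
Hypotheses (HhT : Hh^T = Hh) (Hh_psd : forall y : 'cV[R]_q, 0 <= (y^T *m Hh *m y) 0 0).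
Hypothesis e0_feasible : qp_feasible G W S x0 e0.
Hypotheses (GAE_unit : GA *m E \in unitmx) (JHJ_unit : J^T *m Hh *m J \in unitmx).
Hypotheses (GAJ : GA *m J = 0) (EEJJ : E *m E^T + J *m J^T = 1%:M).

Theorem active_set_affine_law (x : 'cV[R]_n) :
  let SA := rows_of A S in
  let WA := rows_of A W in
  let Keps := K_eps Hh GA SA E J in
  let beps := b_eps Hh c GA WA E J in
  let Klam := K_lam Hh GA SA E J in
  let blam := b_lam Hh c GA WA E J in
  let T := col_mx (rows_of I G *m Keps - rows_of I S) (- Klam) in
  let d := col_mx (rows_of I W - rows_of I G *m beps) blam in
  (forall i, (T *m x) i 0 <= d i 0) ->
  qp_optimizer Hh c G W S x (Keps *m x + beps) /\
  exists lam : 'cV[R]_k,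
    qp_multiplier Hh c G W S x (Keps *m x + beps) lam /\
    rows_of A lam = Klam *m x + blam /\
    (forall i, i \notin A -> lam i 0 = 0).
Proof.
move=> SA WA Keps beps Klam blam T d /col_mx_mul_le[inact_le lam_ge0].
set eps := Keps *m x + beps; set lamA := Klam *m x + blam.
have inactive_feasible i : i \in I -> (G *m eps) i 0 <= (W + S *m x) i 0.
  move=> iI; move: (inact_le (enum_rank_in iI i)).
  rewrite mulmxBl -mulmxA !rows_of_mul (mulmxDr G (Keps *m x) beps).
  (* Generalized so that rewriting cannot unfold the let-bound [beps]. *)
  move: (G *m (Keps *m x)) (G *m beps) => u v.
  by rewrite !addmxE !oppmxE !rows_of_in; lra.
have lamA_ge0 j : 0 <= lamA j 0.
  by move: (lam_ge0 j); rewrite mulNmx oppmxE addmxE; lra.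
have active_eq (j : 'I_#|A|) :
    (G *m eps) (enum_val j) 0 = (W + S *m x) (enum_val j) 0.
  have := affine_optimizer_active Hh c SA WA GAE_unit GAJ x.
  move/(congr1 (fun v : 'cV[R]_#|A| => v j 0)); rewrite /= rows_of_mul rows_ofE.
  by rewrite addmxE rows_of_mul !rows_ofE addmxE [in RHS]addrC.
have eps_feasible : qp_feasible G W S x eps.
  move=> i; have [iA|iA] := boolP (i \in A).
    by rewrite -(enum_rankK_in iA iA) active_eq.
  exact/inactive_feasible/notin_active_set.
have lam_mult : qp_multiplier Hh c G W S x eps (zero_extend A lamA).
  split; last split.
  - move=> i; have [iA|iA] := boolP (i \in A); last by rewrite zero_extend_notin.
    by rewrite -(enum_rankK_in iA iA) zero_extend_enum_val.
  - by rewrite trmx_mul_zero_extend affine_multiplier_stationary ?subrr.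
  - move=> i; have [iA|iA] := boolP (i \in A); last by rewrite zero_extend_notin ?mul0r.
    by rewrite -(enum_rankK_in iA iA) !addmxE !oppmxE active_eq addmxE; ring.
split; first exact: qp_multiplier_optimizer lam_mult.
exists (zero_extend A lamA); split=> //; split; first exact: rows_of_zero_extend.
exact: zero_extend_notin.
Qed.

End ActiveSetAffineLaw.

Section MinMaxQP.
Variables (R : realFieldType) (p : nat) (H : 'M[R]_p).
Local Notation c := (cvec R p).

Lemma Hhat_cvec (H' : 'M[R]_p) : Hhat H' *m c = 0.
Proof. by rewrite /Hhat /cvec mul_block_col !mulmx0 !mul0mx !addr0 col_mx0. Qed.

Lemma trmx_Hhat : (Hhat H)^T = Hhat H^T.
Proof. by rewrite /Hhat tr_block_mx !trmx0. Qed.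

Lemma cvec_Hhat : c^T *m Hhat H = 0.
Proof. by rewrite -[LHS]trmxK trmx_mul trmxK trmx_Hhat Hhat_cvec trmx0. Qed.

Lemma qp_cost_Hhat_shift (e : 'cV[R]_(p + 1)) t :
  qp_cost (Hhat H) c (e + t *: c) = qp_cost (Hhat H) c e + t.
Proof.
rewrite /qp_cost -mulmxA mulmxDr -scalemxAr Hhat_cvec scaler0 addr0 mulmxA.
have cTc : (c^T *m c) 0 0 = 1.
  by rewrite /cvec tr_col_mx mul_row_col trmx0 mul0mx add0r !mxE big_ord1 !mxE mulr1.
rewrite linearD linearZ /= mulmxDl -scalemxAl cvec_Hhat scaler0 addr0.
by rewrite mulmxDr -scalemxAr addmxE scalemxE cTc mulr1 addrA.
Qed.

Lemma optimizer_active_rows_cvec k n (G : 'M[R]_(k, p + 1)) W (S : 'M[R]_(k, n)) x e :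
  qp_optimizer (Hhat H) c G W S x e -> rows_of (active_set G W S x e) G *m c != 0.
Proof.
case=> fe e_min; apply/negP => /eqP GAc0.
have [t t_gt0 fe_t] : exists2 t, 0 < t & qp_feasible G W S x (e + t *: - c).
  apply: qp_feasible_dir => // i iA.
  by rewrite mulmxN oppmxE -(rows_of_in _ _ iA) -rows_of_mul GAc0 mxE oppr0.
by have := e_min _ fe_t; rewrite scalerN -scaleNr qp_cost_Hhat_shift; lra.
Qed.

Hypothesis H_posdef : posdef H.

Lemma Hhat_quad (y : 'cV[R]_(p + 1)) :
  y^T *m Hhat H *m y = (usubmx y)^T *m H *m usubmx y.
Proof.
rewrite -[y in LHS]vsubmxK /Hhat tr_col_mx mul_row_block !mulmx0 !addr0.
by rewrite mul_row_col mul0mx addr0.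
Qed.

Lemma Hhat_psd (y : 'cV[R]_(p + 1)) : 0 <= (y^T *m Hhat H *m y) 0 0.
Proof.
rewrite Hhat_quad; have [->|y1_neq0] := eqVneq (usubmx y) 0; first by rewrite mulmx0 mxE.
exact/ltW/(H_posdef.2 _ y1_neq0).
Qed.

Lemma Hhat_quad_eq0 (y : 'cV[R]_(p + 1)) :
  (y^T *m Hhat H *m y) 0 0 = 0 -> y = dsubmx y 0 0 *: c.
Proof.
move=> y_quad0; have y1_eq0 : usubmx y = 0.
  by apply: contra_eq y_quad0 => /H_posdef.2; rewrite -Hhat_quad => /gt_eqF ->.
rewrite -[y in LHS]vsubmxK y1_eq0 /cvec scale_col_mx scaler0; congr col_mx.
by apply/matrixP=> i j; rewrite !ord1 !mxE mulr1.
Qed.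

Lemma unitmx_trmx_Hhat a b (GA : 'M[R]_(a, p + 1)) (J : 'M[R]_(p + 1, b)) :
  J^T *m J = 1%:M -> GA *m J = 0 -> GA *m c != 0 -> J^T *m Hhat H *m J \in unitmx.
Proof.
move=> JtJ GAJ GAc; rewrite -row_free_unit; apply: inj_row_free => v vJHJ.
pose y := J *m v^T.
have y_quad0 : (y^T *m Hhat H *m y) 0 0 = 0.
  have : v *m (J^T *m Hhat H *m J) *m v^T = 0 by rewrite vJHJ mul0mx.
  by rewrite /y trmx_mul trmxK !mulmxA => ->; rewrite mxE.
have GAy : GA *m y = 0 by rewrite /y mulmxA GAJ mul0mx.
have y0 : y = 0.
  move: GAy; rewrite (Hhat_quad_eq0 y_quad0) -scalemxAr => /eqP.
  by rewrite scalemx_eq0 (negbTE GAc) orbF => /eqP ->; rewrite scale0r.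
by rewrite -[v]trmxK -[v^T]mul1mx -JtJ -mulmxA -/y y0 mulmx0 trmx0.
Qed.

End MinMaxQP.

Unset Implicit Arguments.

Theorem lemma1 (R : realFieldType) (n m N l r : nat)
  (H : 'M[R]_(m * N))
  (Gm : 'M[R]_(l, m * N)) (gm : 'cV[R]_l) (Gc : 'M[R]_(r, m * N))
  (Wm : 'cV[R]_l) (Wc : 'cV[R]_r) (Sm : 'M[R]_(l, n)) (Sc : 'M[R]_(r, n))
  (HposH : posdef H)
  (x : 'cV[R]_n) (eps_x : 'cV[R]_(m * N + 1))
  (Hopt : qp_optimizer (Hhat H) (@cvec R (m * N)) (Gmat Gm gm Gc) (Wvec Wm Wc) (Smat Sm Sc)
            x eps_x) :
  let Hh := Hhat H in
  let c := @cvec R (m * N) in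
  let G := Gmat Gm gm Gc in
  let W := Wvec Wm Wc in
  let S := Smat Sm Sc in
  let A := active_set G W S x eps_x in
  let I := inactive_set G W S x eps_x in
  let GA := rows_of A G in
  forall (E : 'M[R]_(m * N + 1, #|A|)) (J : 'M[R]_(m * N + 1, m * N + 1 - #|A|))
         (F : 'M[R]_#|A|),
  \rank GA = #|A| ->
  (row_mx E J)^T *m row_mx E J = 1%:M ->
  is_trig_mx F^T ->
  GA^T = row_mx E J *m col_mx F 0 ->
  let SA := rows_of A S in
  let WA := rows_of A W in
  let Keps := K_eps Hh GA SA E J in
  let beps := b_eps Hh c GA WA E J in
  let Klam := K_lam Hh GA SA E J in
  let blam := b_lam Hh c GA WA E J in
  let T := col_mx (rows_of I G *m Keps - rows_of I S) (- Klam) in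
  let d := col_mx (rows_of I W - rows_of I G *m beps) blam in
  forall x' : 'cV[R]_n,
    (forall i, (T *m x') i 0 <= d i 0) ->
    qp_optimizer Hh c G W S x' (Keps *m x' + beps) /\
    exists lam : 'cV[R]_(l + r),
      qp_multiplier Hh c G W S x' (Keps *m x' + beps) lam /\
      rows_of A lam = Klam *m x' + blam /\
      (forall i, i \notin A -> lam i 0 = 0).
Proof.
move=> Hh c G W S A I GA E J F rkGA EJ_orth _ GA_QR.
have [EtJ JtJ] := row_mx_orthonormal EJ_orth.
have EEJJ : E *m E^T + J *m J^T = 1%:M.
  by apply: (row_mx_orthonormalC EJ_orth); rewrite subnKC // -rkGA rank_leq_col.
have GAJ : GA *m J = 0.
  by rewrite -[GA]trmxK GA_QR mul_row_col mulmx0 addr0 trmx_mul -mulmxA EtJ mulmx0.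
have GAE_unit : GA *m E \in unitmx.
  exact: unitmx_full_rank_mul rkGA (mulmx_EEt GAJ EEJJ).
have JHJ_unit : J^T *m Hh *m J \in unitmx.
  exact: (unitmx_trmx_Hhat HposH JtJ GAJ (optimizer_active_rows_cvec Hopt)).
have HhT : Hh^T = Hh by rewrite trmx_Hhat HposH.1.
exact: active_set_affine_law HhT (Hhat_psd HposH) Hopt.1 GAE_unit JHJ_unit GAJ EEJJ.
Qed.
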